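(* Let $1\le d_1\le d_2$ and let $G=(V,E)$ be a finite connected undirected unweighted $(d_1,d_2)$-bidegreed graph. Then for every $\lambda\in[0,1]$ and every $S_0\subseteq V$, \[\mathrm{fp}^{\lambda,1}_G(S_0)=\frac{\sum_{v\in S_0}f(\deg_v)}{\sum_{v\in V}f(\deg_v)},\qquad f(d_1)=1,\quad f(d_2)=\frac{\lambda d_1+(1-\lambda)d_2}{\lambda d_2+(1-\lambda)d_1}.\]
   Context: A graph is $(d_1,d_2)$-bidegreed, $d_1\le d_2$, if every vertex has degree in $\{d_1,d_2\}$; $\deg_v$ is the degree of $v$. The $\lambda$-mixed Moran process on a connected graph $G=(V,E)$ with $n=|V|\ge 2$: each vertex hosts a resident (fitness $1$) or mutant (fitness $r>0$); the state is the mutant set $S_t\subseteq V$. Each step, independently: with probability $\lambda$ a Birth-death step (a vertex $u$ chosen with probability proportional to fitness among all vertices; a uniformly random neighbor of $u$ takes $u$'s type); with probability $1-\lambda$ a death-Birth step (a uniformly random vertex $v$ dies; a neighbor $u$ of $v$ chosen with probability proportional to fitness among the neighbors of $v$; $v$ takes $u$'s type). $\mathrm{fp}^{\lambda,r}_G(S_0)$ is the probability of reaching $S_t=V$ from $S_0$. *)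

From HB Require Import structures.
From mathcomp Require Import all_boot all_order all_algebra.
From mathcomp Require Import all_classical all_reals all_analysis.
Set Implicit Arguments. Unset Strict Implicit. Unset Printing Implicit Defensive.
Import Order.TTheory GRing.Theory Num.Theory numFieldNormedType.Exports.
Local Open Scope ring_scope.

Definition simple_graph (T : finType) (e : rel T) : Prop :=
  symmetric e /\ irreflexive e.

Definition graph_connected (T : finType) (e : rel T) : Prop :=
  forall x y : T, connect e x y.

Definition nbhd (T : finType) (e : rel T) (v : T) : {set T} := [set u | e v u].
Definition deg (T : finType) (e : rel T) (v : T) : nat := #|nbhd e v|.

Definition bidegreed (T : finType) (e : rel T) (d1 d2 : nat) : Prop :=
  (d1 <= d2)%N /\ forall v : T, deg e v = d1 \/ deg e v = d2.

Section Moran.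
Variables (R : realType) (T : finType) (e : rel T) (lam r : R).

(* fitness of vertex u in state S (S = mutant set) *)
Definition fit (S : {set T}) (u : T) : R := if u \in S then r else 1.

(* v takes u's type *)
Definition upd (S : {set T}) (u v : T) : {set T} :=
  if u \in S then v |: S else S :\ v.

Definition moran_step (S S' : {set T}) : R :=
  lam * (\sum_(u : T) \sum_(v in nbhd e u)
           (fit S u / (\sum_(w : T) fit S w)) * (deg e u)%:R^-1
           * (S' == upd S u v)%:R)
  + (1 - lam) * (\sum_(v : T) \sum_(u in nbhd e v)
           (#|T|%:R^-1) * (fit S u / (\sum_(w in nbhd e v) fit S w))
           * (S' == upd S u v)%:R).

Fixpoint moran_steps (t : nat) (S S' : {set T}) : R :=
  match t with
  | 0%N => (S == S')%:R
  | t'.+1 => \sum_(S'' : {set T}) moran_steps t' S S'' * moran_step S'' S'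
  end.

(* fixation probability: probability of reaching the absorbing state V;
   since V is absorbing this is lim_t P(S_t = V | S_0). *)
Definition fixation_prob (S0 : {set T}) : R :=
  limn (fun t => moran_steps t S0 [set: T]).

End Moran.

From HB Require Import structures.
From mathcomp Require Import all_boot all_order all_algebra.
From mathcomp Require Import all_classical all_reals all_analysis.
From mathcomp Require Import ring lra.
Import Order.TTheory GRing.Theory Num.Theory numFieldNormedType.Exports.
Set Implicit Arguments. Unset Strict Implicit. Unset Printing Implicit Defensive.
Local Open Scope ring_scope.

(* Write n = #|T|.  At r = 1 every fitness ratio is 1/n or 1/deg, so a step of the
   process copies the type of u onto a neighbour v at rate
   q(u, v) = (lam / deg u + (1 - lam) / deg v) / n.  On a (d1, d2)-bidegreed graph the
   weight F v := f (deg v) satisfies detailed balance F v * q(u, v) = F u * q(v, u),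
   which makes the potential Phi S := sum_(v in S) F v a martingale.  Off the two
   absorbing states some edge leaves S, and copying across it moves Phi by at least
   min F with probability at least 1/n^2; so the quadratic variation of Phi is bounded
   below there.  As E[Phi^2] <= Phi(V)^2 at all times, the expected time spent outside
   {set0, V} is finite, and the martingale property then forces
   P(S_t = V) --> Phi(S0) / Phi(V). *)

Lemma ler_sum_term (R : numDomainType) (I : finType) (P : pred I) (F : I -> R) i :
  P i -> (forall j, P j -> 0 <= F j) -> F i <= \sum_(j | P j) F j.
Proof.
move=> Pi F_ge0; rewrite (bigD1 i) //= lerDl.
by apply: sumr_ge0 => j /andP[Pj _]; exact: F_ge0.
Qed.

Lemma sum_antisym_eq0 (R : numFieldType) (I : finType) (H : I -> I -> R) :
  (forall i j, H j i = - H i j) -> \sum_i \sum_j H i j = 0.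
Proof.
move=> H_anti; set s := (X in X = 0).
have s_opp : s = - s.
  rewrite {1}/s exchange_big /s -sumrN; apply: eq_bigr => j _.
  by rewrite -sumrN; apply: eq_bigr => i _; rewrite H_anti.
have : s *+ 2 == 0 by rewrite mulr2n {2}s_opp subrr.
by rewrite mulrn_eq0 => /eqP.
Qed.

Section MarkovChain.
Variables (R : realType) (X : finType) (P : X -> X -> R).

Fixpoint chain_steps (t : nat) (x y : X) : R :=
  if t is t'.+1 then \sum_z chain_steps t' x z * P z y else (x == y)%:R.

Definition qvar (Phi : X -> R) (x : X) : R :=
  \sum_y P x y * (Phi y - Phi x) ^+ 2.

Lemma expect_chain_steps0 x0 (g : X -> R) :
  \sum_y chain_steps 0 x0 y * g y = g x0.
Proof.
rewrite (bigD1 x0) //= eqxx mul1r big1 ?addr0 // => y /negbTE.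
by rewrite eq_sym => ->; rewrite mul0r.
Qed.

Lemma expect_chain_stepsS t x0 (g : X -> R) :
  \sum_y chain_steps t.+1 x0 y * g y =
  \sum_x chain_steps t x0 x * \sum_y P x y * g y.
Proof.
under eq_bigr do rewrite /= mulr_suml.
rewrite exchange_big; apply: eq_bigr => x _.
by rewrite mulr_sumr; apply: eq_bigr => y _; rewrite mulrA.
Qed.

Variables (Phi : X -> R) (bot top : X) (c : R).
Hypotheses (P_ge0 : forall x y, 0 <= P x y) (P_sum1 : forall x, \sum_y P x y = 1).

Lemma chain_steps_ge0 t x y : 0 <= chain_steps t x y.
Proof.
elim: t y => [|t IH] y /=; first by rewrite ler0n.
by apply: sumr_ge0 => z _; rewrite mulr_ge0.
Qed.

Lemma chain_steps_sum1 t x0 : \sum_y chain_steps t x0 y = 1.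
Proof.
transitivity (\sum_y chain_steps t x0 y * 1); first by apply: eq_bigr => y _; rewrite mulr1.
elim: t => [|t IH]; first exact: expect_chain_steps0.
rewrite expect_chain_stepsS -[RHS]IH; apply: eq_bigr => x _.
by under eq_bigr do rewrite mulr1; rewrite P_sum1 mulr1.
Qed.

Hypothesis Phi_harmonic : forall x, \sum_y P x y * Phi y = Phi x.

Lemma expect_chain_steps_harmonic t x0 : \sum_x chain_steps t x0 x * Phi x = Phi x0.
Proof.
elim: t => [|t IH]; first exact: expect_chain_steps0.
by rewrite expect_chain_stepsS; under eq_bigr do rewrite Phi_harmonic.
Qed.

Lemma expect_sqr_harmonic x :
  \sum_y P x y * Phi y ^+ 2 = Phi x ^+ 2 + qvar Phi x.
Proof.
have -> : qvar Phi x = \sum_y P x y * Phi y ^+ 2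
    - 2 * Phi x * (\sum_y P x y * Phi y) + Phi x ^+ 2 * \sum_y P x y.
  rewrite /qvar !mulr_sumr -sumrB -big_split /=.
  by apply: eq_bigr => y _; ring.
by rewrite Phi_harmonic P_sum1; ring.
Qed.

Lemma expect_chain_stepsS_sqr t x0 :
  \sum_x chain_steps t.+1 x0 x * Phi x ^+ 2 =
  \sum_x chain_steps t x0 x * Phi x ^+ 2 + \sum_x chain_steps t x0 x * qvar Phi x.
Proof.
rewrite expect_chain_stepsS -big_split /=; apply: eq_bigr => x _.
by rewrite expect_sqr_harmonic mulrDr.
Qed.

Hypotheses (Phi_bot : Phi bot = 0) (Phi_ge0 : forall x, 0 <= Phi x)
  (Phi_le_top : forall x, Phi x <= Phi top) (Phi_top_gt0 : 0 < Phi top)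
  (c_gt0 : 0 < c) (qvar_ge : forall x, x != top -> x != bot -> c <= qvar Phi x).

Definition transient_mass t x0 :=
  \sum_(x | (x != top) && (x != bot)) chain_steps t x0 x.

Lemma transient_mass_ge0 t x0 : 0 <= transient_mass t x0.
Proof. by apply: sumr_ge0 => x _; exact: chain_steps_ge0. Qed.

Lemma expect_chain_steps_sqr_le t x0 :
  \sum_x chain_steps t x0 x * Phi x ^+ 2 <= Phi top ^+ 2.
Proof.
rewrite -[leRHS]mul1r -(chain_steps_sum1 t x0) mulr_suml.
apply: ler_sum => x _; rewrite ler_wpM2l ?chain_steps_ge0 //.
by rewrite lerXn2r ?nnegrE ?Phi_ge0.
Qed.

Lemma expect_qvar_ge t x0 :
  c * transient_mass t x0 <= \sum_x chain_steps t x0 x * qvar Phi x.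
Proof.
rewrite mulr_sumr [leRHS](bigID (fun x => (x != top) && (x != bot))) /=.
rewrite -[leLHS]addr0; apply: lerD.
  apply: ler_sum => x /andP[xtop xbot].
  by rewrite mulrC ler_wpM2l ?chain_steps_ge0 ?qvar_ge.
apply: sumr_ge0 => x _; rewrite mulr_ge0 ?chain_steps_ge0 //.
by apply: sumr_ge0 => y _; rewrite mulr_ge0 ?sqr_ge0.
Qed.

Lemma transient_mass_series_le t x0 :
  c * \sum_(0 <= k < t) transient_mass k x0 <= Phi top ^+ 2.
Proof.
apply: le_trans (expect_chain_steps_sqr_le t x0).
elim: t => [|t IH].
  by rewrite big_geq // mulr0 sumr_ge0 // => x _; rewrite mulr_ge0 ?chain_steps_ge0 ?sqr_ge0.
rewrite big_nat_recr //= mulrDr expect_chain_stepsS_sqr lerD //.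
exact: expect_qvar_ge.
Qed.

Local Open Scope classical_set_scope.

Lemma transient_mass_cvg0 x0 : transient_mass t x0 @[t --> \oo] --> 0.
Proof.
apply: cvg_series_cvg_0; apply: nondecreasing_is_cvgn.
  apply/nondecreasing_seqP => k; rewrite /series /= big_nat_recr //= lerDl.
  exact: transient_mass_ge0.
exists (Phi top ^+ 2 / c) => _ [k _ <-].
by rewrite ler_pdivlMr // mulrC transient_mass_series_le.
Qed.

Lemma chain_steps_top_gap t x0 :
  - transient_mass t x0 <= chain_steps t x0 top - Phi x0 / Phi top <= transient_mass t x0.
Proof.
have bot_top : bot != top by apply: contraTneq Phi_top_gt0 => <-; rewrite Phi_bot ltxx.
have := expect_chain_steps_harmonic t x0.
rewrite (bigD1 top) //= (bigD1 bot) //=.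
rewrite Phi_bot mulr0 add0r; set W := \sum_(x | _) _ => E.
have W_ge0 : 0 <= W by apply: sumr_ge0 => x _; rewrite mulr_ge0 ?chain_steps_ge0.
have W_le : W <= transient_mass t x0 * Phi top.
  rewrite /transient_mass mulr_suml; apply: ler_sum => x _.
  by rewrite ler_wpM2l ?chain_steps_ge0.
have -> : Phi x0 / Phi top = chain_steps t x0 top + W / Phi top.
  by rewrite -E mulrDl mulfK ?gt_eqF.
have : W / Phi top <= transient_mass t x0 by rewrite ler_pdivrMr.
have : 0 <= W / Phi top by rewrite divr_ge0 // ltW.
have := transient_mass_ge0 t x0.
move=> *; apply/andP; split; lra.
Qed.

Theorem chain_steps_cvg_top x0 :
  chain_steps t x0 top @[t --> \oo] --> Phi x0 / Phi top.
Proof.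
have gap_cvg0 : chain_steps t x0 top - Phi x0 / Phi top @[t --> \oo] --> 0.
  apply: (squeeze_cvgr _ _ (transient_mass_cvg0 x0)).
    by apply: filterE => t; exact: chain_steps_top_gap.
  by rewrite -oppr0; apply: cvgN; exact: transient_mass_cvg0.
rewrite -[X in _ --> X]add0r.
under eq_fun do rewrite -(subrK (Phi x0 / Phi top) (chain_steps _ x0 top)).
exact: cvgD gap_cvg0 (cvg_cst _).
Qed.

End MarkovChain.

Lemma connect_boundary_edge (T : finType) (e : rel T) (S : {set T}) x y :
  connect e x y -> x \in S -> y \notin S -> exists u v, [/\ u \in S, v \notin S & e u v].
Proof.
move=> /connectP[p e_p ->] {y}; elim: p x e_p => [|z p IH] x /= e_p xS.
  by rewrite xS.
case/andP: e_p => e_xz e_p; have [zS|zNS] := boolP (z \in S).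
  exact: IH.
by move=> _; exists x, z.
Qed.

Lemma deg_gt0_edge (T : finType) (e : rel T) u v : e u v -> (0 < deg e u)%N.
Proof. by move=> e_uv; apply/card_gt0P; exists v; rewrite inE. Qed.

Lemma moran_steps_chain (R : realType) (T : finType) (e : rel T) (lam r : R) :
  moran_steps e lam r = chain_steps (moran_step e lam r).
Proof.
apply/funext => t; apply/funext => S; apply/funext.
by elim: t => //= t IH S'; under eq_bigr do rewrite IH.
Qed.

Lemma fixation_prob_card0 (R : realType) (T : finType) (e : rel T) (lam r : R) S0 :
  #|T| = 0%N -> fixation_prob e lam r S0 = 0.
Proof.
move=> T0; have noT (v : T) : False by have := card0_eq T0 v; rewrite inE.
have step0 S S' : moran_step e lam r S S' = 0.
  by rewrite /moran_step !big1 ?mulr0 ?addr0 // => v; case: (noT v).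
apply: cvg_lim => //; rewrite -cvg_shiftS.
suff -> : (fun t => moran_steps e lam r t.+1 S0 [set: T]) = fun=> 0 by exact: cvg_cst.
by apply: funext => t /=; apply: big1 => S _; rewrite step0 mulr0.
Qed.

Section Potential.
Variables (R : comNzRingType) (T : finType) (F : T -> R).

Definition potential (S : {set T}) : R := \sum_(v in S) F v.

Lemma potential_upd S u v :
  potential (upd S u v) - potential S = ((u \in S)%:R - (v \in S)%:R) * F v.
Proof.
rewrite /upd /potential; case: (u \in S); have [vS|vNS] := boolP (v \in S) => /=.
- by rewrite (finset.setUidPr _) ?subrr ?mul0r // finset.sub1set.
- by rewrite big_setU1 //= addrK subr0 mul1r.
- by rewrite [X in _ - X](big_setD1 v) //=; ring.
- by rewrite (finset.setDidPl _) ?subrr ?mul0r // disjoint_sym disjoints1.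
Qed.

End Potential.

Section NeutralMoran.
Variables (R : realType) (T : finType) (e : rel T) (lam : R).

Local Notation P := (moran_step e lam 1).

Definition neutral_rate (u v : T) : R :=
  #|T|%:R^-1 * (lam / (deg e u)%:R + (1 - lam) / (deg e v)%:R).

Lemma moran_step_neutral S S' : P S S' =
  lam * (\sum_u \sum_(v in nbhd e u) #|T|%:R^-1 / (deg e u)%:R * (S' == upd S u v)%:R)
  + (1 - lam) * (\sum_v \sum_(u in nbhd e v) #|T|%:R^-1 / (deg e v)%:R * (S' == upd S u v)%:R).
Proof.
rewrite /moran_step /fit.
have sum_fit1 (A : {set T}) : \sum_(w in A) (if w \in S then 1 else 1) = #|A|%:R :> R.
  by under eq_bigr do rewrite if_same; rewrite sumr_const.
have -> : \sum_w (if w \in S then 1 else 1) = #|T|%:R :> R.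
  by under eq_bigr do rewrite if_same; rewrite sumr_const.
under eq_bigr do under eq_bigr do rewrite if_same mul1r.
congr (_ * _ + _ * _); apply: eq_bigr => v _; apply: eq_bigr => u _.
by rewrite sum_fit1 if_same mul1r.
Qed.

Lemma sum_indicator_nbhd (c : T -> T -> R) (g : {set T} -> R) (pick : T -> T -> {set T}) :
  \sum_S' (\sum_u \sum_(v in nbhd e u) c u v * (S' == pick u v)%:R) * g S'
  = \sum_u \sum_(v in nbhd e u) c u v * g (pick u v).
Proof.
under eq_bigr do rewrite mulr_suml; rewrite exchange_big; apply: eq_bigr => u _.
under eq_bigr do rewrite mulr_suml; rewrite exchange_big; apply: eq_bigr => v _.
rewrite (bigD1 (pick u v)) //= eqxx mulr1 big1 ?addr0 // => S' /negbTE ->.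
by rewrite mulr0 mul0r.
Qed.

Lemma moran_step_expect_neutral S (g : {set T} -> R) :
  \sum_S' P S S' * g S' =
  lam * (\sum_u \sum_(v in nbhd e u) #|T|%:R^-1 / (deg e u)%:R * g (upd S u v))
  + (1 - lam) * (\sum_v \sum_(u in nbhd e v) #|T|%:R^-1 / (deg e v)%:R * g (upd S u v)).
Proof.
under eq_bigr do rewrite moran_step_neutral mulrDl -!mulrA.
rewrite big_split /= -!mulr_sumr (sum_indicator_nbhd _ _ (upd S)).
by rewrite (sum_indicator_nbhd _ _ (fun v u => upd S u v)).
Qed.

Hypothesis e_sym : symmetric e.

Lemma sum_nbhd_swap (G : T -> T -> R) :
  \sum_v \sum_(u in nbhd e v) G u v = \sum_u \sum_(v in nbhd e u) G u v.
Proof.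
under eq_bigr do rewrite big_mkcond; rewrite exchange_big /=.
apply: eq_bigr => u _; rewrite [RHS]big_mkcond; apply: eq_bigr => v _.
by rewrite !inE e_sym.
Qed.

Lemma moran_step_expect S (g : {set T} -> R) :
  \sum_S' P S S' * g S' = \sum_u \sum_(v in nbhd e u) neutral_rate u v * g (upd S u v).
Proof.
rewrite moran_step_expect_neutral [in X in _ + _ * X]sum_nbhd_swap !mulr_sumr -big_split /=.
apply: eq_bigr => u _; rewrite !mulr_sumr -big_split /=; apply: eq_bigr => v _.
by rewrite /neutral_rate; ring.
Qed.

Lemma moran_step_eval S X :
  P S X = \sum_u \sum_(v in nbhd e u) neutral_rate u v * (upd S u v == X)%:R.
Proof.
rewrite -(moran_step_expect S (fun S' => (S' == X)%:R)) (bigD1 X) //= eqxx mulr1.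
by rewrite big1 ?addr0 // => S' /negbTE ->; rewrite mulr0.
Qed.

Hypothesis lam01 : 0 <= lam <= 1.

Lemma neutral_rate_ge0 u v : 0 <= neutral_rate u v.
Proof.
have [lam_ge0 lam_le1] := andP lam01.
by rewrite /neutral_rate mulr_ge0 ?addr_ge0 ?mulr_ge0 ?invr_ge0 ?ler0n ?subr_ge0.
Qed.

Lemma moran_step_ge0 S S' : 0 <= P S S'.
Proof.
rewrite moran_step_eval; apply: sumr_ge0 => u _; apply: sumr_ge0 => v _.
by rewrite mulr_ge0 ?neutral_rate_ge0.
Qed.

Lemma moran_step_ge_rate S u v : e u v -> neutral_rate u v <= P S (upd S u v).
Proof.
move=> e_uv; rewrite moran_step_eval.
have term_ge0 u' v' : 0 <= neutral_rate u' v' * (upd S u' v' == upd S u v)%:R.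
  by rewrite mulr_ge0 ?neutral_rate_ge0.
apply: le_trans (ler_sum_term (i := u) isT _); last by move=> u' _; apply: sumr_ge0.
apply: le_trans (ler_sum_term (i := v) _ _) => //; last by rewrite inE.
by rewrite eqxx mulr1.
Qed.

Lemma neutral_rate_ge u v : e u v -> #|T|%:R^-1 ^+ 2 <= neutral_rate u v.
Proof.
move=> e_uv; have [lam_ge0 lam_le1] := andP lam01.
have inv_card_le w : (0 < deg e w)%N -> #|T|%:R^-1 <= (deg e w)%:R^-1 :> R.
  move=> w_gt0; have T_gt0 := leq_trans w_gt0 (max_card _).
  by rewrite lef_pV2 ?posrE ?ltr0n // ler_nat max_card.
have u_le := inv_card_le u (deg_gt0_edge e_uv).
have e_vu : e v u by rewrite e_sym.
have v_le := inv_card_le v (deg_gt0_edge e_vu).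
by rewrite /neutral_rate expr2 ler_wpM2l ?invr_ge0 ?ler0n //; nra.
Qed.

Hypotheses (deg_gt0 : forall v, (0 < deg e v)%N) (T_gt0 : (0 < #|T|)%N).

Lemma moran_step_sum1 S : \sum_S' P S S' = 1.
Proof.
have nbhd_mass w : \sum_(x in nbhd e w) #|T|%:R^-1 / (deg e w)%:R = #|T|%:R^-1 :> R.
  by rewrite sumr_const -(mulr_natr (_ / _)) mulfVK ?pnatr_eq0 -?lt0n.
have := moran_step_expect_neutral S (fun=> 1); under eq_bigr do rewrite mulr1.
move=> ->; under eq_bigr do under eq_bigr do rewrite mulr1.
under eq_bigr do rewrite nbhd_mass.
rewrite sumr_const -(mulr_natr #|T|%:R^-1) mulVf ?pnatr_eq0 -?lt0n //; ring.
Qed.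

Variable F : T -> R.
Hypothesis F_balance : forall u v, e u v -> F v * neutral_rate u v = F u * neutral_rate v u.

Lemma potential_harmonic S : \sum_S' P S S' * potential F S' = potential F S.
Proof.
have -> : potential F S = \sum_S' P S S' * potential F S.
  by rewrite -mulr_suml moran_step_sum1 mul1r.
apply/eqP; rewrite -subr_eq0 -sumrB.
under eq_bigr do rewrite -mulrBr.
rewrite moran_step_expect; under eq_bigr do rewrite big_mkcond.
apply/eqP/sum_antisym_eq0 => u v /=; rewrite !inE e_sym !potential_upd.
case: ifP => [e_uv|_]; last by rewrite oppr0.
transitivity (((v \in S)%:R - (u \in S)%:R) * (F u * neutral_rate v u)); first by ring.
by rewrite -F_balance //; ring.
Qed.

Hypothesis e_conn : forall x y, connect e x y.

Lemma potential_qvar_ge m (S : {set T}) x y : 0 <= m -> (forall v, m <= F v) ->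
  x \in S -> y \notin S -> #|T|%:R^-1 ^+ 2 * m ^+ 2 <= qvar P (potential F) S.
Proof.
move=> m_ge0 m_le_F xS yNS.
have [u [v [uS vNS e_uv]]] := connect_boundary_edge (e_conn x y) xS yNS.
apply: le_trans (ler_sum_term (i := upd S u v) isT _); last first.
  by move=> S' _; rewrite mulr_ge0 ?moran_step_ge0 ?sqr_ge0.
rewrite potential_upd uS (negbTE vNS) subr0 mul1r.
apply: ler_pM; rewrite ?exprn_ge0 ?invr_ge0 ?ler0n //.
  exact: le_trans (neutral_rate_ge e_uv) (moran_step_ge_rate S e_uv).
by rewrite lerXn2r ?nnegrE // (le_trans m_ge0).
Qed.

Hypothesis F_gt0 : forall v, 0 < F v.

Theorem neutral_fixation_prob S0 :
  fixation_prob e lam 1 S0 = potential F S0 / potential F [set: T].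
Proof.
have [v0 _] := card_gt0P T_gt0.
have [w _ F_min] := arg_minP (i0 := v0) (P := xpredT) F isT.
have F_ge0 v : 0 <= F v by exact/ltW.
rewrite /fixation_prob moran_steps_chain; apply: cvg_lim => //.
apply: (chain_steps_cvg_top (bot := finset.set0) (c := #|T|%:R^-1 ^+ 2 * F w ^+ 2)).
- exact: moran_step_ge0.
- exact: moran_step_sum1.
- exact: potential_harmonic.
- exact: big_set0.
- by move=> S; apply: sumr_ge0.
- move=> S; rewrite [leRHS](big_setID S) /= finset.setTI lerDl.
  by apply: sumr_ge0.
- by apply: lt_le_trans (ler_sum_term (i := v0) _ _) => //; rewrite inE.
- by rewrite mulr_gt0 ?exprn_gt0 ?invr_gt0 ?ltr0n.
- move=> S; rewrite -properT => /properP[_ [y _ yNS]] /set0Pn[x xS].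
  by apply: potential_qvar_ge xS yNS => // v; apply: F_min.
Qed.

End NeutralMoran.

Section BidegreeWeight.
Variables (R : realType) (d1 d2 : nat) (lam : R).

Definition bidegree_weight (d : nat) : R :=
  if d == d1 then 1
  else (lam * d1%:R + (1 - lam) * d2%:R) / (lam * d2%:R + (1 - lam) * d1%:R).

Hypotheses (d1_gt0 : (0 < d1)%N) (d2_gt0 : (0 < d2)%N) (lam01 : 0 <= lam <= 1).

Let d1_pos : 0 < d1%:R :> R. Proof. by rewrite ltr0n. Qed.
Let d2_pos : 0 < d2%:R :> R. Proof. by rewrite ltr0n. Qed.
Let mixed_pos a b : 0 < a%:R :> R -> 0 < b%:R :> R -> 0 < lam * a%:R + (1 - lam) * b%:R.
Proof. by case/andP: lam01 => *; nra. Qed.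

Lemma bidegree_weight_gt0 d : 0 < bidegree_weight d.
Proof. by rewrite /bidegree_weight; case: ifP => // _; rewrite divr_gt0 ?mixed_pos. Qed.

Lemma bidegree_weight_balance a b : a = d1 \/ a = d2 -> b = d1 \/ b = d2 ->
  bidegree_weight b * (lam / a%:R + (1 - lam) / b%:R) =
  bidegree_weight a * (lam / b%:R + (1 - lam) / a%:R).
Proof.
rewrite /bidegree_weight => a_d b_d; have mixed21_pos := mixed_pos d2_pos d1_pos.
case: a_d b_d => -> [] ->; rewrite ?eqxx //; case: (d2 =P d1) => [->|_] //.
all: by field; rewrite !lt0r_neq0.
Qed.

End BidegreeWeight.

Theorem mainTheorem10 (R : realType) (T : finType) (e : rel T) (d1 d2 : nat)
  (lam : R) (S0 : {set T}) :
  simple_graph e -> graph_connected e -> (1 <= d1)%N -> bidegreed e d1 d2 ->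
  0 <= lam <= 1 ->
  let f := fun d : nat =>
    if d == d1 then 1
    else (lam * d1%:R + (1 - lam) * d2%:R) / (lam * d2%:R + (1 - lam) * d1%:R) in
  fixation_prob e lam 1 S0 =
    (\sum_(v in S0) f (deg e v)) / (\sum_(v : T) f (deg e v)).
Proof.
move=> [e_sym _] e_conn d1_gt0 [d1_le_d2 deg_d12] lam01 f.
have [T0|T_gt0] := posnP #|T|.
  by rewrite fixation_prob_card0 // big1 ?mul0r // => v; have := card0_eq T0 v; rewrite inE.
have d2_gt0 := leq_trans d1_gt0 d1_le_d2.
have deg_gt0 v : (0 < deg e v)%N by case: (deg_d12 v) => ->.
rewrite (neutral_fixation_prob e_sym lam01 deg_gt0 T_gt0 (F := fun v => f (deg e v))) //.
- by congr (_ / _); apply: eq_bigl => v; rewrite inE.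
- move=> u v _; rewrite /neutral_rate mulrCA [RHS]mulrCA.
  by congr (_ * _); apply: bidegree_weight_balance.
- by move=> v; apply: bidegree_weight_gt0.
Qed.
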